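(* Let $(a,b,c)$ be a triple of non-negative integers with $a+b+c>1$. If $a\ge b+c$, or $b\ge c+a$, or $c\ge a+b$, then $GW_{\mathbb{C}P^1\times\mathbb{C}P^1\times\mathbb{C}P^1}(a,b,c)=0$.
   Context: $(a,b,c)$ denotes the class $aM_1+bM_2+cM_3$ where $M_1=[\mathbb{C}P^1\times\{pt\}\times\{pt\}]$, $M_2=[\{pt\}\times\mathbb{C}P^1\times\{pt\}]$, $M_3=[\{pt\}\times\{pt\}\times\mathbb{C}P^1]$. $GW_{(\mathbb{C}P^1)^3}(a,b,c)$ is the number of irreducible rational curves of class $(a,b,c)$ through $a+b+c$ generic points of $(\mathbb{C}P^1)^3$. *)

From mathcomp Require Import all_boot all_algebra.
From mathcomp Require Import complex.
From mathcomp Require Import Rstruct.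
From mathcomp Require Import mpoly.

Set Implicit Arguments.
Unset Strict Implicit.
Unset Printing Implicit Defensive.

Import GRing.Theory.
Local Open Scope ring_scope.

Definition CC : closedFieldType := (Rdefinitions.R)[i].

Section P1cube.
Variable K : fieldType.

(* Homogeneous coordinates of a point of P^1: a pair (x0, x1), required nonzero. *)
Definition nzv (x : K * K) : bool := (x.1 != 0) || (x.2 != 0).
Definition peq (x y : K * K) : bool := x.1 * y.2 == x.2 * y.1.

Definition pt3 := 'I_3 -> K * K.
Definition nz3 (P : pt3) : Prop := forall j, nzv (P j).
Definition peq3 (P Q : pt3) : Prop := forall j, peq (P j) (Q j).

Definition heval (d : nat) (f : 'I_d.+1 -> K) (t : K * K) : K :=
  \sum_(i < d.+1) f i * t.1 ^+ i * t.2 ^+ (d - i).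

(* A map P^1 -> (P^1)^3 of multidegree deg: in each factor j a pair of binary
   forms of degree deg j (to be checked without common zero). *)
Definition pmap (deg : 'I_3 -> nat) :=
  forall j : 'I_3, ('I_(deg j).+1 -> K) * ('I_(deg j).+1 -> K).

Definition peval (deg : 'I_3 -> nat) (phi : pmap deg) (t : K * K) : pt3 :=
  fun j => (heval (phi j).1 t, heval (phi j).2 t).

Definition is_morphism deg (phi : pmap deg) : Prop :=
  forall j t, nzv t -> nzv (peval phi t j).

(* phi is birational onto its image (generically injective): injective on P^1
   minus finitely many points. *)
Definition gen_injective deg (phi : pmap deg) : Prop :=
  exists S : seq (K * K), all nzv S /\
    forall t u, nzv t -> nzv u -> all (fun s => ~~ peq t s) S ->
      all (fun s => ~~ peq u s) S ->
      peq3 (peval phi t) (peval phi u) -> peq t u.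

(* An irreducible rational curve of class (deg 0, deg 1, deg 2) is the image of
   a morphism P^1 -> (P^1)^3 of that multidegree, birational onto its image. *)
Definition rat_param deg (phi : pmap deg) : Prop :=
  is_morphism phi /\ gen_injective phi.

Definition passes deg (phi : pmap deg) (P : pt3) : Prop :=
  exists t, nzv t /\ peq3 (peval phi t) P.

(* Two parametrizations define the same curve iff they have the same image. *)
Definition same_image deg (phi psi : pmap deg) : Prop :=
  (forall t, nzv t -> exists u, nzv u /\ peq3 (peval phi t) (peval psi u)) /\
  (forall u, nzv u -> exists t, nzv t /\ peq3 (peval phi t) (peval psi u)).

Definition curve_count deg (n : nat) (pts : 'I_n -> pt3) (N : nat) : Prop :=
  exists cs : 'I_N -> pmap deg,
    (forall k, rat_param (cs k) /\ forall i, passes (cs k) (pts i)) /\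
    (forall k l, k != l -> ~ same_image (cs k) (cs l)) /\
    (forall phi : pmap deg, rat_param phi -> (forall i, passes phi (pts i)) ->
       exists k, same_image phi (cs k)).

End P1cube.

Definition class3 (a b c : nat) : 'I_3 -> nat :=
  fun j => nth 0%N [:: a; b; c] j.

(* GW_{(CP^1)^3}(a,b,c) = N : for a generic configuration of a+b+c points of
   (CP^1)^3 (i.e. for all configurations (in the standard affine chart) off the
   zero set of some nonzero polynomial in their 3(a+b+c) affine coordinates),
   there are exactly N irreducible rational curves of class (a,b,c) through them. *)
Definition GW_P1cube_is (a b c N : nat) : Prop :=
  let n := (a + b + c)%N in
  exists g : {mpoly CC[n * 3]}, g != 0 /\
    forall x : 'I_(n * 3) -> CC, g.@[x] != 0 ->
      curve_count (class3 a b c)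
        (fun i : 'I_n => fun j : 'I_3 => (x (mxvec_index i j), 1)) N.

(* A curve of class (d0, d1, d2) with d0 >= d1 + d2 through n = d0 + d1 + d2
   points x_1, ..., x_n is determined by: the coordinates of the points in the
   first factor, the preimages t_i of the points on P^1, of which t_1, t_2, t_3
   can be moved to 0, 1, infinity, and the two pairs of binary forms defining
   the other factors, each normalized by one coefficient.  These are
   2n - 1 + 2(d1 + d2) <= 3n - 1 parameters, and every coordinate of every x_i
   is a rational function of them.  Hence the 3n coordinates of a
   configuration lying on such a curve satisfy a fixed nontrivial polynomial
   relation, which a generic configuration avoids.  For n = 2 one of d1, d2 is
   0, the curve is constant in that factor, and two generic points are not. *)

From Pilot Require Import Defs.
From mathcomp Require Import all_boot all_algebra.
From mathcomp Require Import mpoly ring zify.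

Set Implicit Arguments.
Unset Strict Implicit.
Unset Printing Implicit Defensive.

Import GRing.Theory.
Local Open Scope ring_scope.

Section TotalDegree.
Variables (R : idomainType) (n : nat).
Implicit Types (p q : {mpoly R[n]}).

Definition tdeg p := (msize p).-1.

Lemma tdeg_le_msize p k : (tdeg p <= k)%N = (msize p <= k.+1)%N.
Proof. by rewrite /tdeg; case: (msize p). Qed.

Lemma tdegC c : tdeg c%:MP = 0%N.
Proof. by rewrite /tdeg msizeC; case: (c == 0). Qed.

Lemma tdeg0 : tdeg 0 = 0%N.
Proof. by rewrite /tdeg msize0. Qed.

Lemma tdeg1 : tdeg 1 = 0%N.
Proof. exact: tdegC. Qed.

Lemma tdegX i : tdeg 'X_i = 1%N.
Proof. by rewrite /tdeg msizeX mdeg1. Qed.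

Lemma tdegM_le p q : (tdeg (p * q) <= tdeg p + tdeg q)%N.
Proof.
have [->|nz_p] := eqVneq p 0; first by rewrite mul0r tdeg0.
have [->|nz_q] := eqVneq q 0; first by rewrite mulr0 tdeg0 addn0.
have := msize_poly_eq0 p; have := msize_poly_eq0 q.
rewrite /tdeg msizeM // (negbTE nz_p) (negbTE nz_q); lia.
Qed.

Lemma tdegX_le p k : (tdeg (p ^+ k) <= tdeg p * k)%N.
Proof.
elim: k => [|k IH]; first by rewrite expr0 tdeg1.
by rewrite exprS mulnS (leq_trans (tdegM_le _ _)) // leq_add2l.
Qed.

Lemma tdeg_prod_le (I : Type) (r : seq I) (F : I -> {mpoly R[n]}) :
  (tdeg (\prod_(i <- r) F i) <= \sum_(i <- r) tdeg (F i))%N.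
Proof.
elim: r => [|i r IH]; first by rewrite !big_nil tdeg1.
by rewrite !big_cons (leq_trans (tdegM_le _ _)) // leq_add2l.
Qed.

Lemma tdeg_sum_le (I : Type) (r : seq I) (F : I -> {mpoly R[n]}) k :
  (forall i, tdeg (F i) <= k)%N -> (tdeg (\sum_(i <- r) F i) <= k)%N.
Proof.
move=> le_Fk; apply: (big_ind (fun p => tdeg p <= k)%N) => // [|p q]; first by rewrite tdeg0.
rewrite !tdeg_le_msize => le_pk le_qk.
by rewrite (leq_trans (msizeD_le _ _)) // geq_max le_pk le_qk.
Qed.
End TotalDegree.

Section AlgebraicDependence.
Variable K : fieldType.

Lemma exists_nonzero_left_kernel r c (A : 'M[K]_(r, c)) :
  (c < r)%N -> exists2 v : 'rV_r, v != 0 & v *m A = 0.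
Proof.
move=> lt_cr; have /rowV0Pn[v /sub_kermxP vA nz_v] : kermx A != 0.
  by rewrite kermx_eq0 -row_leq_rank -ltnNge (leq_ltn_trans (rank_leq_col A)).
by exists v.
Qed.

Definition bounded_mnm m k (a : {ffun 'I_m -> 'I_k}) : 'X_{1..m} :=
  [multinom (a i : nat) | i < m].

Lemma bounded_mnm_inj m k : injective (@bounded_mnm m k).
Proof.
move=> a b /mnmP eq_ab; apply/ffunP => i; apply: val_inj.
by have := eq_ab i; rewrite !mnmE.
Qed.

Lemma mpoly_linear_dependence m E (I : finType) (H : I -> {mpoly K[m]}) :
  (forall i, tdeg (H i) <= E)%N -> (E.+1 ^ m < #|I|)%N ->
  exists2 v : I -> K, (exists i, v i != 0) & \sum_i v i *: H i = 0.
Proof.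
move=> deg_H card_I.
pose A := \matrix_(r < #|I|, b < #|{ffun 'I_m -> 'I_E.+1}|)
  (H (enum_val r))@_(bounded_mnm (enum_val b)).
have [w nz_w wA] : exists2 w : 'rV_#|I|, w != 0 & w *m A = 0.
  by apply: exists_nonzero_left_kernel; rewrite card_ffun !card_ord.
exists (fun i => w 0 (enum_rank i)).
  by case/rV0Pn: nz_w => r w_r; exists (enum_val r); rewrite enum_valK.
apply/mpolyP => mu; rewrite mcoeff0 raddf_sum /=.
have [small_mu|/forallPn[k]] := boolP [forall k, mu k <= E]%N.
- pose b : {ffun 'I_m -> 'I_E.+1} := [ffun k => inord (mu k)].
  have <- : bounded_mnm b = mu.
    by apply/mnmP => k; rewrite mnmE ffunE inordK // ltnS (forallP small_mu).
  move/matrixP: wA => /(_ 0 (enum_rank b)); rewrite !mxE => wA.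
  rewrite -[RHS]wA (reindex _ (onW_bij _ (@enum_val_bij _))) /=.
  by apply: eq_bigr => r _; rewrite mcoeffZ mxE !enum_valK enum_rankK.
- rewrite -ltnNge => lt_E_mu; rewrite big1 // => i _.
  apply/eqP; rewrite mcoeffZ mulf_eq0 mcoeff_eq0 msize_mdeg_ge ?orbT //.
  rewrite (leq_trans _ (_ : mu k <= mdeg mu)%N) //; last first.
    by rewrite mdegE (bigD1 k) //= leq_addr.
  by rewrite (leq_trans _ lt_E_mu) // -tdeg_le_msize.
Qed.

Lemma exponent_count_lt N m e D :
  (m < N)%N -> ((N * e).+1 ^ N.-1 <= D)%N -> ((N * e * D).+1 ^ m < D.+1 ^ N)%N.
Proof.
move=> lt_mN le_D; have D_gt0 : (0 < D)%N by apply: leq_trans le_D; rewrite expn_gt0.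
have le_base : ((N * e * D).+1 <= (N * e).+1 * D)%N by rewrite mulSn; lia.
have base_gt0 : (0 < (N * e).+1 * D)%N by rewrite muln_gt0.
apply: (@leq_ltn_trans (((N * e).+1 * D) ^ N.-1)).
  apply: leq_trans (leq_pexp2l base_gt0 (_ : m <= N.-1)%N).
    by case: m {lt_mN} => [|m]; rewrite ?expn0 // leq_exp2r.
  by rewrite -ltnS prednK // (leq_ltn_trans _ lt_mN).
rewrite expnMn (@leq_ltn_trans (D * D ^ N.-1)) ?leq_mul //.
by rewrite -expnS prednK ?ltn_exp2r ?(leq_ltn_trans _ lt_mN).
Qed.

(* The products [prod_i P_i ^ a_i * Q_i ^ (D - a_i)] with [a_i <= D] outnumber
   the monomials they can involve, so a nontrivial combination of them vanishes. *)
Theorem algebraic_dependence m N e (P Q : 'I_N -> {mpoly K[m]}) :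
  (m < N)%N -> (forall i, tdeg (P i) <= e /\ tdeg (Q i) <= e)%N ->
  exists2 G : {mpoly K[N]}, G != 0 &
    forall p : 'I_m -> K, (forall i, (Q i).@[p] != 0) ->
      G.@[fun i => (P i).@[p] / (Q i).@[p]] = 0.
Proof.
move=> lt_mN deg_PQ; pose D := ((N * e).+1 ^ N.-1)%N.
pose H (a : {ffun 'I_N -> 'I_D.+1}) := \prod_i (P i ^+ a i * Q i ^+ (D - a i)).
have deg_H a : (tdeg (H a) <= N * e * D)%N.
  rewrite (leq_trans (tdeg_prod_le _ _)) // -mulnA -[in X in (_ <= X)%N](card_ord N).
  rewrite -sum_nat_const leq_sum // => i _; have [le_Pe le_Qe] := deg_PQ i.
  have le_aD : (a i <= D)%N by rewrite -ltnS.
  apply: leq_trans (tdegM_le _ _) _.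
  apply: leq_trans (leq_add (tdegX_le _ _) (tdegX_le _ _)) _.
  apply: leq_trans (leq_add (leq_mul le_Pe (leqnn _)) (leq_mul le_Qe (leqnn _))) _.
  by rewrite -mulnDr subnKC.
have [|v [a0 nz_va0] dep] := mpoly_linear_dependence deg_H.
  by rewrite card_ffun !card_ord exponent_count_lt.
exists (\sum_a v a *: 'X_[bounded_mnm a]).
  apply/eqP => /(congr1 (mcoeff (bounded_mnm a0))); rewrite mcoeff0 raddf_sum.
  rewrite (bigD1 a0) //= big1 ?addr0 => [|a ne_a]; rewrite mcoeffZ mcoeffX.
    by rewrite eqxx mulr1; apply/eqP.
  by rewrite (inj_eq (@bounded_mnm_inj _ _)) (negbTE ne_a) mulr0.
move=> p nz_Q; pose c := \prod_i (Q i).@[p] ^+ D.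
have nz_c : c != 0 by rewrite prodf_seq_neq0; apply/allP => i _; rewrite expf_neq0.
apply: (mulIf nz_c); rewrite mul0r -(meval0 p) -dep !raddf_sum /= mulr_suml.
apply: eq_bigr => a _; rewrite !mevalZ mevalX -mulrA; congr (_ * _).
rewrite -big_split rmorph_prod; apply: eq_bigr => i _ /=.
rewrite rmorphM !rmorphXn /= mnmE.
have -> : (Q i).@[p] ^+ D = (Q i).@[p] ^+ a i * (Q i).@[p] ^+ (D - a i).
  by rewrite -exprD subnKC // -ltnS.
by rewrite mulrA -exprMn divfK.
Qed.
End AlgebraicDependence.

Section FormsOverRings.
Variable R : comNzRingType.

Definition form_eval d (f : 'I_d.+1 -> R) (t : R * R) : R :=
  \sum_(i < d.+1) f i * t.1 ^+ i * t.2 ^+ (d - i).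

Definition form_params d := ('I_d.+1 + 'I_d)%type.

Definition num_form d (v : form_params d -> R) : 'I_d.+1 -> R := fun k => v (inl k).

(* The coefficient of [t.2 ^ d] in a denominator is normalized to 1. *)
Definition den_form d (v : form_params d -> R) : 'I_d.+1 -> R :=
  fun k => if unlift ord0 k is Some k' then v (inr k') else 1.

End FormsOverRings.

Lemma tdeg_form_eval (R : idomainType) m d (A : 'I_d.+1 -> {mpoly R[m]}) T :
  (forall k, tdeg (A k) <= 1)%N -> (tdeg T.1 <= 1)%N -> (tdeg T.2 <= 1)%N ->
  (tdeg (form_eval A T) <= d.+1)%N.
Proof.
move=> deg_A deg_T1 deg_T2; apply: tdeg_sum_le => k.
have le_kd : (k <= d)%N by rewrite -ltnS.
have tdegX_small (p : {mpoly R[m]}) j : (tdeg p <= 1)%N -> (tdeg (p ^+ j) <= j)%N.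
  move=> le_p1; apply: leq_trans (tdegX_le _ _) _.
  by rewrite -[X in (_ <= X)%N]mul1n leq_mul.
apply: leq_trans (tdegM_le _ _) _.
have le_AT1 : (tdeg (A k * T.1 ^+ k) <= 1 + k)%N.
  exact: leq_trans (tdegM_le _ _) (leq_add (deg_A k) (tdegX_small _ k deg_T1)).
apply: leq_trans (leq_add le_AT1 (tdegX_small _ (d - k)%N deg_T2)) _; lia.
Qed.

Section BinaryForms.
Variable K : fieldType.
Implicit Types (t u : K * K) (F G : K * K -> K).

Lemma meval_form_eval m (e : 'I_m -> K) d (A : 'I_d.+1 -> {mpoly K[m]}) T :
  (form_eval A T).@[e] = heval (fun k => (A k).@[e]) (T.1.@[e], T.2.@[e]).
Proof.
by rewrite rmorph_sum; apply: eq_bigr => k _; rewrite !rmorphM !rmorphXn.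
Qed.

Lemma eq_heval d (f g : 'I_d.+1 -> K) : f =1 g -> heval f =1 heval g.
Proof. by move=> eq_fg t; apply: eq_bigr => i _; rewrite eq_fg. Qed.

Definition is_form d F := exists f : 'I_d.+1 -> K, F =1 heval f.

Lemma eq_is_form d F G : F =1 G -> is_form d F -> is_form d G.
Proof. by move=> eq_FG [f eq_f]; exists f => u; rewrite -eq_FG. Qed.

Lemma is_form0 d : is_form d (fun=> 0).
Proof. by exists (fun=> 0) => u; rewrite /heval big1 // => i _; rewrite !mul0r. Qed.

Lemma is_form1 : is_form 0 (fun=> 1).
Proof. by exists (fun=> 1) => u; rewrite /heval big_ord1 !expr0 !mulr1. Qed.

Lemma is_form_lin d c F G :
  is_form d F -> is_form d G -> is_form d (fun u => c * F u + G u).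
Proof.
move=> [f eq_f] [g eq_g]; exists (fun i => c * f i + g i) => u.
rewrite eq_f eq_g /heval mulr_sumr -big_split /=.
by apply: eq_bigr => i _; rewrite !mulrDl !mulrA.
Qed.

Lemma is_formZ d c F : is_form d F -> is_form d (fun u => c * F u).
Proof.
by move/(is_form_lin c)/(_ (is_form0 d)); apply: eq_is_form => u; rewrite addr0.
Qed.

Lemma is_form_sum d k (F : 'I_k -> K * K -> K) :
  (forall i, is_form d (F i)) -> is_form d (fun u => \sum_i F i u).
Proof.
elim: k F => [|k IH] F form_F.
  by apply: eq_is_form (is_form0 d) => u; rewrite big_ord0.
apply: eq_is_form (is_form_lin 1 (form_F ord0) (IH _ (fun i => form_F (lift ord0 i)))).
by move=> u; rewrite big_ord_recl mul1r.
Qed.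

Lemma is_form_mulx d F : is_form d F -> is_form d.+1 (fun u => u.1 * F u).
Proof.
move=> [f eq_f]; exists (fun i => if unlift ord0 i is Some j then f j else 0) => u.
rewrite eq_f /heval [RHS]big_ord_recl /= unlift_none !mul0r add0r mulr_sumr.
apply: eq_bigr => i _; rewrite liftK /= subSS exprS; ring.
Qed.

Lemma is_form_muly d F : is_form d F -> is_form d.+1 (fun u => u.2 * F u).
Proof.
move=> [f eq_f]; exists (fun i => if unlift ord_max i is Some j then f j else 0) => u.
rewrite eq_f /heval [RHS]big_ord_recr /= unlift_none !mul0r addr0 mulr_sumr.
apply: eq_bigr => i _; have -> : widen_ord (leqnSn d.+1) i = lift ord_max i.
  by apply: val_inj; rewrite /= /bump leqNgt ltn_ord.
rewrite liftK subSn ?exprS; first ring.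
by rewrite -ltnS.
Qed.

Lemma is_form_mul_linear d a b F :
  is_form d F -> is_form d.+1 (fun u => (u.1 * a + u.2 * b) * F u).
Proof.
move=> form_F.
have := is_form_lin a (is_form_mulx form_F) (is_formZ b (is_form_muly form_F)).
apply: eq_is_form => u; ring.
Qed.

Lemma is_form_linear_pow a1 b1 a2 b2 i j :
  is_form (i + j) (fun u => (u.1 * a1 + u.2 * b1) ^+ i * (u.1 * a2 + u.2 * b2) ^+ j).
Proof.
elim: i => [|i IH].
  elim: j => [|j IH]; first by apply: eq_is_form is_form1 => u; rewrite !expr0 mulr1.
  by apply: eq_is_form (is_form_mul_linear a2 b2 IH) => u; rewrite !expr0 !mul1r exprS.
by apply: eq_is_form (is_form_mul_linear a1 b1 IH) => u; rewrite exprS mulrA.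
Qed.

Definition lincomb (c1 c2 u : K * K) : K * K :=
  (u.1 * c1.1 + u.2 * c2.1, u.1 * c1.2 + u.2 * c2.2).

Lemma heval_lincomb d (f : 'I_d.+1 -> K) (c1 c2 : K * K) :
  exists g : 'I_d.+1 -> K, forall u, heval g u = heval f (lincomb c1 c2 u).
Proof.
suff [g eq_g] : is_form d (fun u => heval f (lincomb c1 c2 u)) by exists g.
apply: is_form_sum => i; have le_id : (i <= d)%N by rewrite -ltnS.
have := is_formZ (f i) (is_form_linear_pow c1.1 c2.1 c1.2 c2.2 i (d - i)).
by rewrite subnKC //; apply: eq_is_form => u; rewrite mulrA.
Qed.

Definition pscale (k : K) t := (k * t.1, k * t.2).

Lemma heval_pscale d (f : 'I_d.+1 -> K) k t :
  heval f (pscale k t) = k ^+ d * heval f t.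
Proof.
rewrite /heval mulr_sumr; apply: eq_bigr => i _ /=; rewrite !exprMn.
have -> : k ^+ d = k ^+ i * k ^+ (d - i) by rewrite -exprD subnKC // -ltnS.
ring.
Qed.

Lemma heval01 d (f : 'I_d.+1 -> K) : heval f (0, 1) = f ord0.
Proof.
rewrite /heval big_ord_recl /= expr0 expr1n !mulr1 big1 ?addr0 // => i _.
by rewrite /= expr0n mulr0 mul0r.
Qed.

Lemma heval_divr d (f : 'I_d.+1 -> K) c t :
  heval (fun k => f k / c) t = heval f t / c.
Proof. rewrite /heval mulr_suml; apply: eq_bigr => i _; ring. Qed.

End BinaryForms.

Section ProjectiveLine.
Variable K : fieldType.
Implicit Types (t u : K * K).

Definition det t u : K := t.1 * u.2 - t.2 * u.1.

Lemma detC t u : det u t = - det t u.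
Proof. rewrite /det; ring. Qed.

Lemma detxx t : det t t = 0.
Proof. rewrite /det; ring. Qed.

Lemma det_pscalel k t u : det (pscale k t) u = k * det t u.
Proof. rewrite /det /=; ring. Qed.

Lemma det_pscaler k t u : det t (pscale k u) = k * det t u.
Proof. rewrite /det /=; ring. Qed.

Lemma affine_coord (a b y : K) : nzv (a, b) -> peq (a, b) (y, 1) -> b != 0 /\ y = a / b.
Proof.
rewrite /nzv /peq /= mulr1 => nz_ab /eqP eq_a.
have nz_b : b != 0 by apply: contraTneq nz_ab => b0; rewrite eq_a b0 mul0r eqxx.
by rewrite eq_a mulrC mulKf.
Qed.

Lemma det_eq0_pscale t u :
  nzv t -> nzv u -> det t u = 0 -> exists2 c, c != 0 & u = pscale c t.
Proof.
case: t u => [t1 t2] [u1 u2]; rewrite /nzv /det /= => nz_t nz_u /eqP.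
rewrite subr_eq0 => /eqP eq_tu.
have [t1_0|nz_t1] := eqVneq t1 0.
  move: nz_t; rewrite t1_0 eqxx /= => nz_t2.
  have u1_0 : u1 = 0.
    by move/eqP: eq_tu; rewrite t1_0 mul0r eq_sym mulf_eq0 (negbTE nz_t2) => /eqP.
  move: nz_u; rewrite u1_0 eqxx /= => nz_u2.
  exists (u2 / t2); first by rewrite mulf_neq0 ?invr_eq0.
  by rewrite /pscale /= mulr0 divfK.
have nz_u1 : u1 != 0.
  apply: contraTneq nz_u => u1_0; move/eqP: eq_tu.
  by rewrite u1_0 mulr0 mulf_eq0 (negbTE nz_t1) => /eqP ->; rewrite eqxx.
exists (u1 / t1); first by rewrite mulf_neq0 ?invr_eq0.
rewrite /pscale /= divfK //; congr pair.
by apply: (mulfI nz_t1); rewrite eq_tu; field; exact: nz_t1.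
Qed.

Lemma heval_ratio_pscale d (f g : 'I_d.+1 -> K) k t : k != 0 -> heval g t != 0 ->
  heval g (pscale k t) != 0 /\
  heval f (pscale k t) / heval g (pscale k t) = heval f t / heval g t.
Proof.
move=> nz_k nz_gt; rewrite !heval_pscale; have nz_kd : k ^+ d != 0 by rewrite expf_neq0.
by rewrite mulf_neq0 // invfM mulrACA divff // mul1r.
Qed.

Lemma det_neq0_heval_ratio d (f g : 'I_d.+1 -> K) t u : nzv t -> nzv u ->
  heval g t != 0 -> heval f t / heval g t != heval f u / heval g u -> det t u != 0.
Proof.
move=> nz_t nz_u nz_gt; apply: contra_neq => /(det_eq0_pscale nz_t nz_u)[k nz_k ->].
by have [_ ->] := heval_ratio_pscale f nz_k nz_gt.
Qed.

(* The affine coordinate of [t] in the frame where [c1] is the point at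
   infinity and [c2] the origin. *)
Definition frame_coord (c1 c2 t : K * K) : K := det t c2 / det c1 t.

Lemma lincomb_frame_coord (c1 c2 t : K * K) : det c1 t != 0 ->
  lincomb c1 c2 (frame_coord c1 c2 t, 1) = pscale (det c1 c2 / det c1 t) t.
Proof.
case: c1 c2 t => [a1 a2] [b1 b2] [t1 t2] nz_det.
rewrite /lincomb /frame_coord /det /= in nz_det *.
by congr pair; rewrite /=; field.
Qed.

Lemma lincomb10 (c1 c2 : K * K) : lincomb c1 c2 (1, 0) = c1.
Proof. by case: c1 => a1 a2; rewrite /lincomb /= !mul1r !mul0r !addr0. Qed.

Lemma lincomb01 (c1 c2 : K * K) : lincomb c1 c2 (0, 1) = c2.
Proof. by case: c2 => b1 b2; rewrite /lincomb /= !mul1r !mul0r !add0r. Qed.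

Lemma three_point_frame t0 t1 t2 :
  det t0 t1 != 0 -> det t0 t2 != 0 -> det t1 t2 != 0 ->
  exists c1 c2 : K * K, exists2 k, k != 0 &
    [/\ c1 = pscale k t2, det c1 c2 != 0, frame_coord c1 c2 t0 = 0
      & frame_coord c1 c2 t1 = 1].
Proof.
move=> nz01 nz02 nz12; have nz10 : det t1 t0 != 0 by rewrite detC oppr_eq0.
have nz21 : det t2 t1 != 0 by rewrite detC oppr_eq0.
exists (pscale (det t1 t0) t2), (pscale (det t2 t1) t0), (det t1 t0) => //; split => //.
- by rewrite det_pscalel det_pscaler !mulf_neq0 // detC oppr_eq0.
- by rewrite /frame_coord det_pscaler detxx mulr0 mul0r.
- rewrite /frame_coord det_pscaler det_pscalel [det t2 t1 * _]mulrC.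
  by rewrite divff // mulf_neq0.
Qed.

Lemma normalized_pullback d (f g : 'I_d.+1 -> K) (c1 c2 : K * K) :
  heval g c2 != 0 ->
  exists v : form_params d -> K, forall u k t, k != 0 ->
    lincomb c1 c2 u = pscale k t -> heval g t != 0 ->
    heval (den_form v) u != 0 /\
    heval (num_form v) u / heval (den_form v) u = heval f t / heval g t.
Proof.
move=> nz_gc2; have [f' eq_f'] := heval_lincomb f c1 c2.
have [g' eq_g'] := heval_lincomb g c1 c2.
have g'0 : g' ord0 = heval g c2 by rewrite -heval01 eq_g' lincomb01.
pose v q := match q with inl k => f' k | inr k => g' (lift ord0 k) end / heval g c2.
have den_v : den_form v =1 (fun k => g' k / heval g c2).
  by move=> k; rewrite /den_form; case: unliftP => [k' ->|->] //; rewrite g'0 divff.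
exists v => u k t nz_k eq_u nz_gt.
rewrite (eq_heval den_v) !heval_divr eq_f' eq_g' eq_u.
have [nz_gkt <-] := heval_ratio_pscale f nz_k nz_gt.
by rewrite mulf_neq0 ?invr_eq0 // -mulf_div divff ?mulr1 ?invr_eq0.
Qed.

End ProjectiveLine.

Lemma card_ord_gt n k : (k < n)%N -> #|[pred i : 'I_n | (k < i)%N]| = (n - k.+1)%N.
Proof.
move=> lt_kn; rewrite cardE size_filter -(count_map val (fun x => k < x)%N) -enumT.
rewrite val_enum_ord -[X in iota _ X](subnKC lt_kn) iotaD count_cat.
have /eq_in_count-> : {in iota 0 k.+1, (fun x => k < x)%N =1 pred0}.
  by move=> x; rewrite mem_iota ltnNge => /andP[_ /negbTE].
have /eq_in_count-> : {in iota (0 + k.+1) (n - k.+1), (fun x => k < x)%N =1 predT}.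
  by move=> x; rewrite mem_iota => /andP[].
by rewrite count_pred0 count_predT size_iota.
Qed.

Definition mxvec_unindex m n (k : 'I_(m * n)) : 'I_m * 'I_n :=
  enum_val (cast_ord (esym (mxvec_cast m n)) k).

Lemma mxvec_indexK m n (i : 'I_m) (j : 'I_n) : mxvec_unindex (mxvec_index i j) = (i, j).
Proof. by rewrite /mxvec_unindex /mxvec_index cast_ordK enum_rankK. Qed.

Lemma mxvec_indexl_inj m n (j : 'I_n) : injective (fun i : 'I_m => mxvec_index i j).
Proof. by move=> i i' /(congr1 (@mxvec_unindex _ _)); rewrite !mxvec_indexK => -[]. Qed.

Lemma mpolyXB_neq0 (R : nzRingType) m (u v : 'I_m) :
  u != v -> 'X_u - 'X_v != 0 :> {mpoly R[m]}.
Proof.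
move=> ne_uv; apply/eqP => /(congr1 (mcoeff U_(u))).
rewrite mcoeffB !mcoeffXU eqxx eq_sym (negbTE ne_uv) subr0 mcoeff0 => /eqP.
by rewrite oner_eq0.
Qed.

Definition config_point (K : fieldType) n (x : 'I_(n * 3) -> K) (i : 'I_n) : pt3 K :=
  fun j => (x (mxvec_index i j), 1).

Definition no_curve_through (K : fieldType) (deg : 'I_3 -> nat) n (x : 'I_(n * 3) -> K) :=
  forall phi : Defs.pmap K deg, is_morphism phi ->
    ~ (forall i, passes phi (config_point x i)).

(* The preimages of the first three points are normalized to 0, 1 and infinity. *)
Definition std_point (R : nzRingType) n (s : 'I_n -> R) (i : 'I_n) : R * R :=
  match nat_of_ord i with
  | 0%N => (0, 1) | 1%N => (1, 1) | 2%N => (1, 0) | _ => (s i, 1)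
  end.

Lemma std_point_map (R S : nzRingType) (f : R -> S) n (s : 'I_n -> R) i :
  f 0 = 0 -> f 1 = 1 -> (f (std_point s i).1, f (std_point s i).2) = std_point (f \o s) i.
Proof.
by move=> f0 f1; rewrite /std_point; case: (nat_of_ord i) => [|[|[|k]]] /=; rewrite ?f0 ?f1.
Qed.

Lemma eq_std_point (R : nzRingType) n (s s' : 'I_n -> R) :
  (forall i : 'I_n, (2 < i)%N -> s i = s' i) -> std_point s =1 std_point s'.
Proof.
by move=> eq_s i; rewrite /std_point; case: i => -[|[|[|k]]] lt_i //; rewrite eq_s.
Qed.

Section Parametrization.
Variables (K : fieldType) (deg : 'I_3 -> nat) (n : nat) (j0 j1 j2 : 'I_3).
Hypothesis j_cover : forall j, [|| j == j0, j == j1 | j == j2].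
Hypotheses (n_gt2 : (2 < n)%N) (deg_small : (2 * (deg j1 + deg j2) <= n)%N).

Let o0 : 'I_n := Ordinal (leq_trans (isT : 0 < 3)%N n_gt2).
Let o1 : 'I_n := Ordinal (leq_trans (isT : 1 < 3)%N n_gt2).
Let o2 : 'I_n := Ordinal n_gt2.

Lemma std_point_affine (s : 'I_n -> K) i :
  i != o2 -> s o0 = 0 -> s o1 = 1 -> std_point s i = (s i, 1).
Proof.
move=> ne_i2 s0 s1; rewrite /std_point.
case: i ne_i2 => -[|[|[|k]]] lt_i //= ne_i2.
- by rewrite -s0 (_ : Ordinal lt_i = o0) //; apply: val_inj.
- by rewrite -s1 (_ : Ordinal lt_i = o1) //; apply: val_inj.
Qed.

Lemma frame_points (t : 'I_n -> K * K) :
  det (t o0) (t o1) != 0 -> (forall i, i != o2 -> det (t i) (t o2) != 0) ->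
  exists c1 c2 : K * K, forall i, exists2 k, k != 0 &
    lincomb c1 c2 (std_point (fun i => frame_coord c1 c2 (t i)) i) = pscale k (t i).
Proof.
move=> nz01 nz_2.
have [c1 [c2 [k nz_k [c1E nz_c12 s0 s1]]]] :=
  three_point_frame nz01 (nz_2 o0 isT) (nz_2 o1 isT).
exists c1, c2 => i; have [->|ne_i2] := eqVneq i o2.
  by exists k; rewrite // /std_point /= lincomb10.
have nz_c1t : det c1 (t i) != 0 by rewrite c1E det_pscalel mulf_neq0 // detC oppr_eq0 nz_2.
exists (det c1 c2 / det c1 (t i)); first by rewrite mulf_neq0 ?invr_eq0.
by rewrite std_point_affine // lincomb_frame_coord.
Qed.

(* The coordinates in the factor [j0] of the points, the affine coordinates of
   the preimages of all but the first three points, and the coefficients of the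
   forms in the factors [j1] and [j2]. *)
Definition params :=
  (('I_n + {i : 'I_n | (2 < i)%N}) + (form_params (deg j1) + form_params (deg j2)))%type.

Definition nparams := #|{: params}|.

Lemma nparams_lt : (nparams < n * 3)%N.
Proof. by rewrite /nparams !card_sum card_sig card_ord_gt // !card_ord; lia. Qed.

Definition var (q : params) : {mpoly K[nparams]} := 'X_(enum_rank q).

Definition affine_var (i : 'I_n) : {mpoly K[nparams]} :=
  if insub i is Some q then var (inl (inr q)) else 0.

Definition coord_num (i : 'I_n) (j : 'I_3) : {mpoly K[nparams]} :=
  if j == j0 then var (inl (inl i))
  else if j == j1 then form_eval (num_form (fun q => var (inr (inl q)))) (std_point affine_var i)
  else form_eval (num_form (fun q => var (inr (inr q)))) (std_point affine_var i).

Definition coord_den (i : 'I_n) (j : 'I_3) : {mpoly K[nparams]} :=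
  if j == j0 then 1
  else if j == j1 then form_eval (den_form (fun q => var (inr (inl q)))) (std_point affine_var i)
  else form_eval (den_form (fun q => var (inr (inr q)))) (std_point affine_var i).

Lemma tdeg_var q : tdeg (var q) = 1%N.
Proof. exact: tdegX. Qed.

Lemma tdeg_form_vars d (emb : form_params d -> params) i :
  (tdeg (form_eval (num_form (var \o emb)) (std_point affine_var i)) <= d.+1)%N /\
  (tdeg (form_eval (den_form (var \o emb)) (std_point affine_var i)) <= d.+1)%N.
Proof.
have [deg_p1 deg_p2] :
    (tdeg (std_point affine_var i).1 <= 1)%N /\ (tdeg (std_point affine_var i).2 <= 1)%N.
  rewrite /std_point; case: (nat_of_ord i) => [|[|[|k]]] /=;
    rewrite ?tdeg0 ?tdeg1 ?tdeg_var //.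
  by rewrite /affine_var; case: insub => [q|]; rewrite ?tdeg_var ?tdeg0.
split; apply: tdeg_form_eval => // k; first by rewrite /num_form tdeg_var.
by rewrite /den_form; case: (unlift ord0 k) => [k'|]; rewrite ?tdeg_var ?tdeg1.
Qed.

Lemma tdeg_coord i j :
  (tdeg (coord_num i j) <= (deg j1 + deg j2).+1)%N /\
  (tdeg (coord_den i j) <= (deg j1 + deg j2).+1)%N.
Proof.
have le_j1 : ((deg j1).+1 <= (deg j1 + deg j2).+1)%N by rewrite ltnS leq_addr.
have le_j2 : ((deg j2).+1 <= (deg j1 + deg j2).+1)%N by rewrite ltnS leq_addl.
rewrite /coord_num /coord_den; case: (j == j0); first by rewrite tdeg_var tdeg1.
case: (j == j1).
  have [le_num le_den] := tdeg_form_vars (fun q => inr (inl q)) i.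
  by split; [exact: leq_trans le_num le_j1 | exact: leq_trans le_den le_j1].
have [le_num le_den] := tdeg_form_vars (fun q => inr (inr q)) i.
by split; [exact: leq_trans le_num le_j2 | exact: leq_trans le_den le_j2].
Qed.

Definition param_eval (pv : params -> K) : 'I_nparams -> K := fun r => pv (enum_val r).

Lemma var_eval pv q : (var q).@[param_eval pv] = pv q.
Proof. by rewrite mevalXU /param_eval enum_rankK. Qed.

Lemma affine_var_eval pv (s : 'I_n -> K) (i : 'I_n) :
  (forall q, pv (inl (inr q)) = s (val q)) -> (2 < i)%N ->
  (affine_var i).@[param_eval pv] = s i.
Proof. by move=> pv_s lt2i; rewrite /affine_var insubT var_eval pv_s. Qed.

Lemma form_vars_eval pv d (emb : form_params d -> params) (s : 'I_n -> K) i :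
  (forall q, pv (inl (inr q)) = s (val q)) ->
  (form_eval (num_form (var \o emb)) (std_point affine_var i)).@[param_eval pv] =
    heval (num_form (pv \o emb)) (std_point s i) /\
  (form_eval (den_form (var \o emb)) (std_point affine_var i)).@[param_eval pv] =
    heval (den_form (pv \o emb)) (std_point s i).
Proof.
move=> pv_s; rewrite !meval_form_eval std_point_map ?meval0 ?meval1 //.
rewrite (eq_std_point (s' := s)) => [|i' lt2i']; last exact: affine_var_eval.
split; apply: eq_heval => k; first by rewrite var_eval.
by rewrite /den_form; case: (unlift ord0 k) => [k'|]; rewrite ?var_eval ?meval1.
Qed.

Lemma curve_config_in_param_image (x : 'I_(n * 3) -> K) (phi : Defs.pmap K deg)
    (t : 'I_n -> K * K) :
  is_morphism phi -> (forall i, nzv (t i)) ->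
  (forall i, peq3 (peval phi (t i)) (config_point x i)) ->
  x (mxvec_index o0 j0) != x (mxvec_index o1 j0) ->
  (forall i, i != o2 -> x (mxvec_index i j0) != x (mxvec_index o2 j0)) ->
  exists pv : params -> K, forall i j,
    (coord_den i j).@[param_eval pv] != 0 /\
    x (mxvec_index i j) =
      (coord_num i j).@[param_eval pv] / (coord_den i j).@[param_eval pv].
Proof.
move=> mor_phi nz_t on_phi ne01 ne_2.
have coord i j : heval (phi j).2 (t i) != 0 /\
    x (mxvec_index i j) = heval (phi j).1 (t i) / heval (phi j).2 (t i).
  exact: affine_coord (mor_phi j _ (nz_t i)) (on_phi i j).
have det_t i i' : x (mxvec_index i j0) != x (mxvec_index i' j0) -> det (t i) (t i') != 0.
  by rewrite !(coord _ j0).2; apply: det_neq0_heval_ratio; rewrite ?(coord _ _).1.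
have [c1 [c2 frame]] :=
  frame_points (det_t _ _ ne01) (fun i ne => det_t _ _ (ne_2 i ne)).
pose s i := frame_coord c1 c2 (t i).
have nz_c2 j : heval (phi j).2 c2 != 0.
  have [k nz_k] := frame o0; rewrite /std_point /= lincomb01 => ->.
  by rewrite heval_pscale mulf_neq0 ?expf_neq0 ?(coord o0 j).1.
have [v1 pull1] := normalized_pullback (phi j1).1 c1 (nz_c2 j1).
have [v2 pull2] := normalized_pullback (phi j2).1 c1 (nz_c2 j2).
pose pv (q : params) := match q with
  | inl (inl i) => x (mxvec_index i j0)
  | inl (inr i) => s (val i)
  | inr (inl q) => v1 q
  | inr (inr q) => v2 q end.
have pv_s q : pv (inl (inr q)) = s (val q) by [].
exists pv => i j; have [k nz_k eq_k] := frame i.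
rewrite /coord_num /coord_den; have [->|ne_j0] := eqVneq j j0.
  by rewrite var_eval meval1 divr1; split => //; exact: oner_neq0.
have [->|ne_j1] := eqVneq j j1.
  have [-> ->] := form_vars_eval (fun q => inr (inl q)) i pv_s.
  have [nz_den ratio] := pull1 _ _ _ nz_k eq_k (coord i j1).1.
  by rewrite (coord i j1).2 -ratio.
have j_eq : j = j2 by move: (j_cover j); rewrite (negbTE ne_j0) (negbTE ne_j1) => /eqP.
rewrite j_eq.
have [-> ->] := form_vars_eval (fun q => inr (inr q)) i pv_s.
have [nz_den ratio] := pull2 _ _ _ nz_k eq_k (coord i j2).1.
by rewrite (coord i j2).2 -ratio.
Qed.

Lemma generic_config_no_curve :
  exists2 g : {mpoly K[n * 3]}, g != 0 & forall x, g.@[x] != 0 -> no_curve_through deg x.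
Proof.
pose P k := coord_num (mxvec_unindex k).1 (mxvec_unindex k).2.
pose Q k := coord_den (mxvec_unindex k).1 (mxvec_unindex k).2.
have [G nz_G G_rel] :=
  algebraic_dependence (P := P) (Q := Q) nparams_lt (fun k => tdeg_coord _ _).
pose X i : {mpoly K[n * 3]} := 'X_(mxvec_index i j0).
have nz_XB i i' : i != i' -> X i - X i' != 0.
  by move=> ne_ii'; apply: mpolyXB_neq0; apply: contra_neq ne_ii' => /mxvec_indexl_inj.
(* The difference factors exclude the configurations that [frame_points]
   cannot normalize. *)
exists (G * ((X o0 - X o1) * \prod_(i | i != o2) (X i - X o2))).
  by rewrite !mulf_neq0 ?nz_XB //; apply/prodf_neq0 => i; apply: nz_XB.
have XB_eval x i i' :
    ((X i - X i').@[x] != 0) = (x (mxvec_index i j0) != x (mxvec_index i' j0)).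
  by rewrite mevalB !mevalXU subr_eq0.
move=> x; rewrite !mevalM !mulf_eq0 !negb_or XB_eval rmorph_prod.
move=> /and3P[nz_Gx ne01 /prodf_neq0 ne_2] phi mor_phi /fin_all_exists[t on_t].
have [|pv pv_x] :=
  curve_config_in_param_image mor_phi (fun i => (on_t i).1) (fun i => (on_t i).2) ne01.
  by move=> i /ne_2; rewrite XB_eval.
suff x_eq : x =1 (fun k => (P k).@[param_eval pv] / (Q k).@[param_eval pv]).
  move: nz_Gx; rewrite (meval_eq _ x_eq) G_rel ?eqxx // => k.
  by case: (mxvec_indexP k) => i j; rewrite /Q mxvec_indexK; exact: (pv_x i j).1.
move=> k; case: (mxvec_indexP k) => i j.
by rewrite /P /Q mxvec_indexK; exact: (pv_x i j).2.
Qed.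

End Parametrization.

Lemma heval_deg0 (K : fieldType) d (f : 'I_d.+1 -> K) t : d = 0%N -> heval f t = f ord0.
Proof. by move=> d0; subst d; rewrite /heval big_ord1 !expr0 !mulr1. Qed.

Lemma generic_config_no_curve_const (K : fieldType) (deg : 'I_3 -> nat) n j :
  (1 < n)%N -> deg j = 0%N ->
  exists2 g : {mpoly K[n * 3]}, g != 0 & forall x, g.@[x] != 0 -> no_curve_through deg x.
Proof.
move=> n_gt1 deg_j; pose i0 : 'I_n := Ordinal (ltnW n_gt1); pose i1 : 'I_n := Ordinal n_gt1.
exists ('X_(mxvec_index i0 j) - 'X_(mxvec_index i1 j)).
  by apply: mpolyXB_neq0; apply: contra_neq (isT : i0 != i1) => /mxvec_indexl_inj.
move=> x; rewrite mevalB !mevalXU subr_eq0 => ne_x phi mor_phi on_phi.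
have const i : x (mxvec_index i j) = (phi j).1 ord0 / (phi j).2 ord0.
  have [t [nz_t on_t]] := on_phi i.
  by have [_ ->] := affine_coord (mor_phi j t nz_t) (on_t j); rewrite !heval_deg0.
by move: ne_x; rewrite !const eqxx.
Qed.

Lemma generic_config_no_curve_dominant (K : fieldType) (deg : 'I_3 -> nat) n
    (j0 j1 j2 : 'I_3) :
  (forall j, [|| j == j0, j == j1 | j == j2]) -> (deg j1 + deg j2 <= deg j0)%N ->
  (deg j0 + deg j1 + deg j2 = n)%N -> (1 < n)%N ->
  exists2 g : {mpoly K[n * 3]}, g != 0 & forall x, g.@[x] != 0 -> no_curve_through deg x.
Proof.
move=> cover le_deg sum_deg n_gt1; have [n_gt2|n_le2] := ltnP 2 n.
  by apply: generic_config_no_curve cover n_gt2 _; lia.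
have [deg_j1|nz_deg_j1] := eqVneq (deg j1) 0%N.
  exact: generic_config_no_curve_const n_gt1 deg_j1.
have deg_j2 : deg j2 = 0%N by lia.
exact: generic_config_no_curve_const n_gt1 deg_j2.
Qed.

Lemma curve_count0 (K : fieldType) (deg : 'I_3 -> nat) n (pts : 'I_n -> pt3 K) :
  (forall phi : Defs.pmap K deg, is_morphism phi -> ~ (forall i, passes phi (pts i))) ->
  curve_count deg pts 0.
Proof.
move=> no_curve; have cs : 'I_0 -> Defs.pmap K deg by case.
exists cs; split; first by case.
by split => [[]|phi [mor_phi _] /(no_curve _ mor_phi)].
Qed.

Lemma class3_dominant a b c : (b + c <= a \/ c + a <= b \/ a + b <= c)%N ->
  exists j0 j1 j2 : 'I_3, [/\ forall j, [|| j == j0, j == j1 | j == j2],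
    (class3 a b c j1 + class3 a b c j2 <= class3 a b c j0)%N
    & (class3 a b c j0 + class3 a b c j1 + class3 a b c j2 = a + b + c)%N].
Proof.
have cover (j0 j1 j2 : 'I_3) : [&& j0 != j1, j0 != j2 & j1 != j2] ->
    forall j, [|| j == j0, j == j1 | j == j2].
  by case: j0 j1 j2 => -[|[|[|?]]] ? [[|[|[|?]]] ?] [[|[|[|?]]] ?] // _ [[|[|[|?]]] ?].
case=> [le|[le|le]].
- exists (@Ordinal 3 0 isT), (@Ordinal 3 1 isT), (@Ordinal 3 2 isT).
  by split; [exact: cover | rewrite /class3 /=; lia..].
- exists (@Ordinal 3 1 isT), (@Ordinal 3 2 isT), (@Ordinal 3 0 isT).
  by split; [exact: cover | rewrite /class3 /=; lia..].
- exists (@Ordinal 3 2 isT), (@Ordinal 3 0 isT), (@Ordinal 3 1 isT).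
  by split; [exact: cover | rewrite /class3 /=; lia..].
Qed.

Local Close Scope ring_scope.

Theorem mainTheorem6 (a b c : nat) :
  (1 < a + b + c)%N ->
  ((b + c <= a)%N \/ (c + a <= b)%N \/ (a + b <= c)%N) ->
  GW_P1cube_is a b c 0.
Proof.
move=> n_gt1 /class3_dominant[j0 [j1 [j2 [cover le_deg sum_deg]]]].
have [g nz_g no_curve] :=
  generic_config_no_curve_dominant CC cover le_deg sum_deg n_gt1.
by exists g; split => // x /no_curve; apply: curve_count0.
Qed.
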